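(* Let $p,q\in\mathbb{C}$ and consider the system of difference equations ($m\mathcal{H}1$) $$u_2=v+t\frac{p-q}{s-t},\qquad v_1=u+s\frac{p-q}{s-t},\qquad s_2=\frac{1}{t}+\frac{p-q}{t(u-v)},\qquad t_1=\frac{1}{s}+\frac{p-q}{s(u-v)}.$$ Then: (1) the system implies $\dfrac{s_2}{t_1}=\dfrac{s}{t}$ and $u_2-v_1+\dfrac{p-q}{2}=-\Big(u-v+\dfrac{p-q}{2}\Big)$; (2) for solutions of the system, $tu=sv$ holds if and only if $u_2s_2=t_1v_1$ holds; (3) the system extends to multi-dimensions as $$X^i_j=X^j+Y^j\frac{p^i-p^j}{Y^i-Y^j},\qquad Y^i_j=\frac{1}{Y^j}+\frac{1}{Y^j}\,\frac{p^i-p^j}{X^i-X^j},\qquad i\neq j\in\{1,\dots,n\},$$ and this extended system is multi-dimensionally compatible, i.e. $X^i_{jk}=X^i_{kj}$ and $Y^i_{jk}=Y^i_{kj}$ for all pairwise distinct $i,j,k$; (4) the system arises as the compatibility condition $$L(u_2,s_2;p,\lambda)\,L(v,t;q,\lambda)=L(v_1,t_1;q,\lambda)\,L(u,s;p,\lambda)\quad(\text{for all }\lambda)$$ of the linear system $\Psi_1=L(u,s;p,\lambda)\Psi$, $\Psi_2=L(v,t;q,\lambda)\Psi$, where $$L(u,s;p,\lambda)=\begin{pmatrix}0&0&-u&s(u+p-\lambda)\\0&0&-1&s\\-1&u+p-\lambda&0&0\\-s&su&0&0\end{pmatrix};$$ (5) the companion map $\phi^c:(u,s,v_1,t_1)\mapsto(u_2,s_2,v,t)$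 is a Yang–Baxter map.
   Context: Setting on the $\mathbb{Z}^2$ graph: $u,s$ are complex functions on horizontal edges $\{(m,n),(m+1,n)\}$ and $v,t$ on vertical edges $\{(m,n),(m,n+1)\}$ (each edge labelled by its initial vertex). For an elementary square with lower-left vertex $(m,n)$, $u,s$ are the values on its bottom edge, $v,t$ on its left edge, $u_2,s_2$ on its top edge and $v_1,t_1$ on its right edge; $p$ depends only on $m$ and $q$ only on $n$. In the multi-component notation, $X^i,Y^i$ are functions on the edges of $\mathbb{Z}^n$ parallel to the $i$-th coordinate direction, $p^i$ is a parameter attached to direction $i$ (depending only on the $i$-th coordinate), a subscript $j$ denotes the unit shift in direction $j$, and $X^1=u,Y^1=s,X^2=v,Y^2=t,p^1=p,p^2=q$. Multi-dimensional compatibility means that computing $X^i_{jk},Y^i_{jk}$ from the system by shifting first in direction $j$ then in direction $k$ gives identically the same rational expressions as shifting first in $k$ then in $j$. The system defines (for fixed $p,q$) a map $\phi:(u,s,v,t)\mapsto(u_2,s_2,v_1,t_1)$; its companion map is $\phi^c:(u,s,v_1,t_1)\mapsto(u_2,s_2,v,t)$, obtained by solving the system for $(u_2,s_2,v,t)$. A map $R:(x_i,y_i,\alpha_i;x_j,y_j,\alpha_j)\mapsto(x_i',y_i',\alpha_i;x_j',y_j',\alpha_j)$ (parameters $\alpha$ carried along unchanged) is a Yang–Baxter map if $R_{12}R_{13}R_{23}=R_{23}R_{13}R_{12}$ as maps on triples, where $R_{ij}$ acts as $R$ on the $i$-th and $j$-th factors and as identity on the remaining one. *)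

(* Scalars: an arbitrary numClosedFieldType C (a model of
   the complex numbers, e.g. complex R for R : rcfType, or algC). *)
From mathcomp Require Import all_boot all_order all_algebra.
Set Implicit Arguments. Unset Strict Implicit. Unset Printing Implicit Defensive.
Import GRing.Theory Num.Theory.
Local Open Scope ring_scope.

Section MH1.
Variable C : numClosedFieldType.

(* u,s : bottom edge; v,t : left edge; u2,s2 : top edge; v1,t1 : right edge *)
Definition mH1_u2 (p q u s v t : C) : C := v + t * ((p - q) / (s - t)).
Definition mH1_v1 (p q u s v t : C) : C := u + s * ((p - q) / (s - t)).
Definition mH1_s2 (p q u s v t : C) : C := t^-1 + (p - q) / (t * (u - v)).
Definition mH1_t1 (p q u s v t : C) : C := s^-1 + (p - q) / (s * (u - v)).

Definition mH1 (p q u s v t u2 s2 v1 t1 : C) : Prop :=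
  [/\ u2 = mH1_u2 p q u s v t, s2 = mH1_s2 p q u s v t,
      v1 = mH1_v1 p q u s v t & t1 = mH1_t1 p q u s v t].

Definition mH1_nondeg (u s v t : C) : Prop :=
  [/\ s != 0, t != 0, s - t != 0 & u - v != 0].

(* X i = X^i, Y i = Y^i, P i = p^i at a vertex of Z^n *)
Definition Xstep n (P X Y : 'I_n -> C) (i j : 'I_n) : C :=
  X j + Y j * ((P i - P j) / (Y i - Y j)).
Definition Ystep n (P X Y : 'I_n -> C) (i j : 'I_n) : C :=
  (Y j)^-1 + (Y j)^-1 * ((P i - P j) / (X i - X j)).

(* the fields shifted in direction d (meaningful on components i != d) *)
Definition shiftX n (P X Y : 'I_n -> C) (d : 'I_n) : 'I_n -> C :=
  fun i => Xstep P X Y i d.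
Definition shiftY n (P X Y : 'I_n -> C) (d : 'I_n) : 'I_n -> C :=
  fun i => Ystep P X Y i d.

Definition step_ok n (X Y : 'I_n -> C) (a b : 'I_n) : Prop :=
  [/\ Y a - Y b != 0, Y b != 0 & X a - X b != 0].

Definition Lmat (u s p lam : C) : 'M[C]_4 :=
  \matrix_(i < 4, j < 4)
    nth 0 (nth [::] [:: [:: 0; 0; - u; s * (u + p - lam)];
                        [:: 0; 0; -1; s];
                        [:: -1; u + p - lam; 0; 0];
                        [:: - s; s * u; 0; 0]] i) j.

Definition pt := (C * C * C)%type.

(* phi^c : (u,s ; v1,t1) |-> (u2,s2 ; v,t), first factor carrying p,
   second factor carrying q; obtained by solving (mH1) for (u2,s2,v,t) *)
Definition Rc (a b : pt) : pt * pt :=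
  let: (u, s, p) := a in let: (v1, t1, q) := b in
  ((v1 - (p - q) * (s * t1) / (s * t1 - 1),
    t1 * (v1 - u) / (v1 - u - (p - q)), p),
   (u - (p - q) / (s * t1 - 1),
    s * (v1 - u - (p - q)) / (v1 - u), q)).

Definition Rc_def (a b : pt) : Prop :=
  let: (u, s, p) := a in let: (v1, t1, q) := b in
  [/\ s * t1 - 1 != 0, v1 - u != 0 & v1 - u - (p - q) != 0].

Definition R12 (w : pt * pt * pt) : pt * pt * pt :=
  let: (a, b, c) := w in let: (a', b') := Rc a b in (a', b', c).
Definition R13 (w : pt * pt * pt) : pt * pt * pt :=
  let: (a, b, c) := w in let: (a', c') := Rc a c in (a', b, c').
Definition R23 (w : pt * pt * pt) : pt * pt * pt :=
  let: (a, b, c) := w in let: (b', c') := Rc b c in (a, b', c').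

Definition R12_def (w : pt * pt * pt) : Prop := let: (a, b, c) := w in Rc_def a b.
Definition R13_def (w : pt * pt * pt) : Prop := let: (a, b, c) := w in Rc_def a c.
Definition R23_def (w : pt * pt * pt) : Prop := let: (a, b, c) := w in Rc_def b c.

End MH1.

(* On a square, t s2 = s t1 = (u - v + p - q) / (u - v) and u2 - v1 = v - u - (p - q), which
   gives (1); clearing denominators, u2 s2 - t1 v1 = (s v - t u) (u - v + p - q) / (s t (u - v)),
   which gives (2).
   For (3), going around the (j, k)-face of the cube in either order gives the same explicit
   values of X^i and Y^i at the far corner: sums of quotients whose numerators and denominators
   all change sign when j and k are swapped.
   For (4), the Lax matrices are block antidiagonal; four scalar equations of the Lax equation do
   not involve lambda and already force (mH1), and (mH1) gives all sixteen.
   For (5), the companion map translates the x-coordinates (u, v1) by c = (p - q) / (s t1 - 1),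
   which depends only on the product of the y-coordinates, and rescales the y-coordinates (s, t1)
   by r = d / (d - (p - q)), which depends only on the difference d = v1 - u of the x-coordinates.
   On each side of the braid relation every point is moved twice, and the two sides agree by four
   scalar identities between the c's and r's. *)

From mathcomp Require Import all_boot all_order all_algebra.
From mathcomp Require Import ring.
Import GRing.Theory Num.Theory.
Local Open Scope ring_scope.

Lemma neq0_eq (R : ringType) (x y : R) : x = y -> y != 0 -> x != 0.
Proof. by move=> ->. Qed.

Lemma neq0_mul_eq {F : idomainType} {x y z : F} :
  x != 0 -> y != 0 -> x * y = z -> z != 0.
Proof. by move=> hx hy <-; apply: mulf_neq0. Qed.

Lemma eq_of_sub_eq (R : zmodType) (x y a b : R) : x - y = a - b -> a = b -> x = y.
Proof. by move=> E ab; apply/eqP; rewrite -subr_eq0 E ab subrr. Qed.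

Ltac neq0_by_hyps :=
  match goal with
  | h : is_true (?Q != ?z) |- is_true (?P != ?z) =>
      apply: neq0_eq h; ring
  | h1 : is_true (?Q1 != ?z), h2 : is_true (?Q2 != ?z) |- is_true (?P != ?z) =>
      apply: neq0_eq (mulf_neq0 h1 h2); ring
  end.

Ltac field_nz := field; repeat (apply/andP; split); neq0_by_hyps.

Section Square.
Variables (C : numClosedFieldType) (p q u s v t : C).

Lemma mH1_u2_sub_v1 : s - t != 0 ->
  mH1_u2 p q u s v t - mH1_v1 p q u s v t = v - u - (p - q).
Proof. by move=> hst; rewrite /mH1_u2 /mH1_v1; field_nz. Qed.

Lemma mH1_shifted_diff_opp : s - t != 0 ->
  mH1_u2 p q u s v t - mH1_v1 p q u s v t + (p - q) / 2%:R = - (u - v + (p - q) / 2%:R).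
Proof. by move=> hst; rewrite mH1_u2_sub_v1 // {1}(splitr (p - q)); ring. Qed.

Lemma mH1_s2E : t != 0 -> u - v != 0 ->
  mH1_s2 p q u s v t = (u - v + (p - q)) / (t * (u - v)).
Proof. by move=> ht huv; rewrite /mH1_s2; field_nz. Qed.

Lemma mH1_t1E : s != 0 -> u - v != 0 ->
  mH1_t1 p q u s v t = (u - v + (p - q)) / (s * (u - v)).
Proof. by move=> hs huv; rewrite /mH1_t1; field_nz. Qed.

Lemma mH1_t1_eq0 : s != 0 -> u - v != 0 ->
  (mH1_t1 p q u s v t == 0) = (u - v + (p - q) == 0).
Proof.
move=> hs huv; rewrite mH1_t1E // mulf_eq0 invr_eq0 mulf_eq0.
by rewrite (negbTE hs) (negbTE huv) !orbF.
Qed.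

Lemma mH1_s2_div_t1 : mH1_nondeg u s v t -> mH1_t1 p q u s v t != 0 ->
  mH1_s2 p q u s v t / mH1_t1 p q u s v t = s / t.
Proof.
case=> hs ht _ huv ht1; have hw : u - v + (p - q) != 0 by rewrite -mH1_t1_eq0.
by rewrite mH1_s2E // mH1_t1E //; field_nz.
Qed.

Lemma mH1_cross_sub : mH1_nondeg u s v t ->
  mH1_u2 p q u s v t * mH1_s2 p q u s v t - mH1_t1 p q u s v t * mH1_v1 p q u s v t
  = (s * v - t * u) * ((u - v + (p - q)) / (s * t * (u - v))).
Proof. by case=> hs ht hst huv; rewrite /mH1_u2 /mH1_s2 /mH1_t1 /mH1_v1; field_nz. Qed.

Lemma mH1_cross_iff : mH1_nondeg u s v t -> mH1_t1 p q u s v t != 0 ->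
  t * u = s * v <->
  mH1_u2 p q u s v t * mH1_s2 p q u s v t = mH1_t1 p q u s v t * mH1_v1 p q u s v t.
Proof.
move=> nd ht1; have [hs ht _ huv] := nd.
have hK : (u - v + (p - q)) / (s * t * (u - v)) != 0.
  by rewrite mulf_neq0 ?invr_eq0 ?mulf_neq0 // -mH1_t1_eq0.
split=> [E | /eqP].
  by apply/eqP; rewrite -subr_eq0 mH1_cross_sub // -E subrr mul0r.
by rewrite -subr_eq0 mH1_cross_sub // mulf_eq0 (negbTE hK) orbF subr_eq0 => /eqP/esym.
Qed.

End Square.

Lemma mH1_two_components (C : numClosedFieldType) (p q u s v t : C) :
  let P := [ffun i : 'I_2 => if i == ord0 then p else q] in
  let X := [ffun i : 'I_2 => if i == ord0 then u else v] in
  let Y := [ffun i : 'I_2 => if i == ord0 then s else t] in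
  mH1 p q u s v t (Xstep P X Y ord0 ord_max) (Ystep P X Y ord0 ord_max)
                  (Xstep P X Y ord_max ord0) (Ystep P X Y ord_max ord0).
Proof.
rewrite /Xstep /Ystep /mH1 /mH1_u2 /mH1_s2 /mH1_v1 /mH1_t1 !ffunE /=.
split=> //.
- by rewrite invfM mulrCA.
- by rewrite -divrNN !opprB.
- by rewrite -divrNN !opprB invfM mulrCA.
Qed.

Section MultiComponent.
Variables (C : numClosedFieldType) (n : nat) (P X Y : 'I_n -> C).

Definition alt3 (F : 'I_n -> C) (i j k : 'I_n) : C :=
  (P j - P k) * F i + (P k - P i) * F j + (P i - P j) * F k.

Definition Xcorner (i j k : 'I_n) : C :=
  (P j * Y k - P k * Y j) / (Y j - Y k)
  + ((X k + P k) * (P i - P k) * (X i - X j) - (X j + P j) * (P i - P j) * (X i - X k))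
    / alt3 X i j k.

Definition Ycorner (i j k : 'I_n) : C :=
  (X k - X j) * ((P i - P j) * Y i * Y j + (P j - P k) * Y j * Y k + (P k - P i) * Y k * Y i)
  / ((X j + P j - (X k + P k)) * alt3 Y i j k).

Lemma Xcorner_swap (i j k : 'I_n) : Xcorner i k j = Xcorner i j k.
Proof. by rewrite /Xcorner /alt3; congr (_ + _); rewrite -divrNN; congr (_ / _); ring. Qed.

Lemma Ycorner_swap (i j k : 'I_n) : Ycorner i k j = Ycorner i j k.
Proof. by rewrite /Ycorner /alt3; congr (_ / _); ring. Qed.

Lemma YstepE (i k : 'I_n) : Y k != 0 -> X i - X k != 0 ->
  Ystep P X Y i k = (X i + P i - (X k + P k)) / (Y k * (X i - X k)).
Proof. by move=> hk hik; rewrite /Ystep; field_nz. Qed.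

Lemma Ystep_sub (i j k : 'I_n) : Y k != 0 -> X i - X k != 0 -> X j - X k != 0 ->
  Ystep P X Y i k - Ystep P X Y j k = - alt3 X i j k / (Y k * (X i - X k) * (X j - X k)).
Proof. by move=> hk hik hjk; rewrite /Ystep /alt3; field_nz. Qed.

Lemma Xstep_sub (i j k : 'I_n) : Y i - Y k != 0 -> Y j - Y k != 0 ->
  Xstep P X Y i k - Xstep P X Y j k = - (Y k * alt3 Y i j k) / ((Y i - Y k) * (Y j - Y k)).
Proof. by move=> hik hjk; rewrite /Xstep /alt3; field_nz. Qed.

Lemma Xstep_shift (i j k : 'I_n) :
  step_ok X Y i k -> step_ok X Y j k -> step_ok (shiftX P X Y k) (shiftY P X Y k) i j ->
  Xstep P (shiftX P X Y k) (shiftY P X Y k) i j = Xcorner i j k.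
Proof.
rewrite /step_ok /shiftX /shiftY => -[hYik hYk hXik] [hYjk _ hXjk] [+ _ _].
rewrite Ystep_sub // => hD.
have {}hD : alt3 X i j k != 0 by apply: contraNneq hD => ->; rewrite oppr0 mul0r.
rewrite /Xstep Ystep_sub // /Ystep /Xcorner /alt3 in hD *; field_nz.
Qed.

Lemma Ystep_shift (i j k : 'I_n) :
  step_ok X Y i k -> step_ok X Y j k -> step_ok (shiftX P X Y k) (shiftY P X Y k) i j ->
  Ystep P (shiftX P X Y k) (shiftY P X Y k) i j = Ycorner i j k.
Proof.
rewrite /step_ok /shiftX /shiftY => -[hYik hYk hXik] [hYjk _ hXjk] [_ + +].
rewrite YstepE // Xstep_sub // => hZ hE.
have {}hZ : X j + P j - (X k + P k) != 0 by apply: contraNneq hZ => ->; rewrite mul0r.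
have {}hE : alt3 Y i j k != 0 by apply: contraNneq hE => ->; rewrite mulr0 oppr0 mul0r.
rewrite {1}/Ystep /= YstepE // Xstep_sub // /Ycorner /alt3 in hE *; field_nz.
Qed.

Lemma shift_consistent (i j k : 'I_n) :
  step_ok X Y i k -> step_ok X Y j k -> step_ok (shiftX P X Y k) (shiftY P X Y k) i j ->
  step_ok X Y i j -> step_ok X Y k j -> step_ok (shiftX P X Y j) (shiftY P X Y j) i k ->
  Xstep P (shiftX P X Y k) (shiftY P X Y k) i j = Xstep P (shiftX P X Y j) (shiftY P X Y j) i k
  /\ Ystep P (shiftX P X Y k) (shiftY P X Y k) i j
     = Ystep P (shiftX P X Y j) (shiftY P X Y j) i k.
Proof.
move=> *; split; first by rewrite !Xstep_shift // Xcorner_swap.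
by rewrite !Ystep_shift // Ycorner_swap.
Qed.

End MultiComponent.

Section Lax.
Variable C : numClosedFieldType.

Lemma Lmat_mul_entries (u s p v t q lam : C) :
  let M := Lmat u s p lam *m Lmat v t q lam in
  [/\ M (@Ordinal 4 1 isT) (@Ordinal 4 0 isT) = 1 - s * t,
      M (@Ordinal 4 1 isT) (@Ordinal 4 1 isT) = s * t * v - (v + q - lam),
      M (@Ordinal 4 2 isT) (@Ordinal 4 2 isT) = v - (u + p - lam)
    & M (@Ordinal 4 2 isT) (@Ordinal 4 3 isT) = t * (u + p - lam) - t * (v + q - lam)].
Proof. by rewrite /= !mxE !big_ord_recr !big_ord0 /= !mxE /=; split; ring. Qed.

Variables (p q u s v t u2 s2 v1 t1 : C).

Lemma mH1_of_Lax (lam : C) : mH1_nondeg u s v t ->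
  Lmat u2 s2 p lam *m Lmat v t q lam = Lmat v1 t1 q lam *m Lmat u s p lam ->
  mH1 p q u s v t u2 s2 v1 t1.
Proof.
case=> hs ht hst huv H.
have [+ + + +] := Lmat_mul_entries u2 s2 p v t q lam.
rewrite H; have [-> -> -> ->] := Lmat_mul_entries v1 t1 q u s p lam.
move=> e10 e11 e22 e23.
have ek : s2 * t = t1 * s by apply/oppr_inj/(addrI 1).
have ev1 : v1 = u2 - v + u + (p - q) by apply: eq_of_sub_eq (esym e22); ring.
have eu2 : (s - t) * (u2 - v) = t * (p - q) by apply: eq_of_sub_eq e23; rewrite ev1; ring.
have ek' : s2 * t * (u - v) = u - v + (p - q) by apply: eq_of_sub_eq e11; rewrite -ek; ring.
have hu2 : u2 = mH1_u2 p q u s v t.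
  by rewrite /mH1_u2 mulrA -eu2 mulrAC mulfV // mul1r addrC subrK.
split=> //.
- by rewrite mH1_s2E // -ek' -[s2 * t * _]mulrA mulfK // mulf_neq0.
- by rewrite ev1 hu2 /mH1_u2 /mH1_v1; field_nz.
- by rewrite mH1_t1E // -ek' ek -[t1 * s * _]mulrA mulfK // mulf_neq0.
Qed.

Lemma Lax_of_mH1 (lam : C) : mH1_nondeg u s v t -> mH1 p q u s v t u2 s2 v1 t1 ->
  Lmat u2 s2 p lam *m Lmat v t q lam = Lmat v1 t1 q lam *m Lmat u s p lam.
Proof.
case=> hs ht hst huv [-> -> -> ->]; apply/matrixP => i j.
rewrite !mxE !big_ord_recr !big_ord0 /= !mxE /mH1_u2 /mH1_s2 /mH1_v1 /mH1_t1.
by case: i => [[|[|[|[|i]]]] Hi] //; case: j => [[|[|[|[|j]]]] Hj] //=; field_nz.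
Qed.

Lemma Lax_iff_mH1 : mH1_nondeg u s v t ->
  (forall lam : C, Lmat u2 s2 p lam *m Lmat v t q lam = Lmat v1 t1 q lam *m Lmat u s p lam)
  <-> mH1 p q u s v t u2 s2 v1 t1.
Proof.
move=> nd; split=> [/(_ 0) | h lam]; first exact: mH1_of_Lax.
exact: Lax_of_mH1.
Qed.

End Lax.

Section Companion.
Variable C : numClosedFieldType.

Lemma Rc_of_mH1 (p q u s v t u2 s2 v1 t1 : C) :
  p != q -> mH1_nondeg u s v t -> mH1 p q u s v t u2 s2 v1 t1 ->
  Rc_def (u, s, p) (v1, t1, q) /\ Rc (u, s, p) (v1, t1, q) = ((u2, s2, p), (v, t, q)).
Proof.
move=> hpq [hs ht hst huv] [-> -> -> ->].
have hpq' : p - q != 0 by rewrite subr_eq0.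
have ek : s * mH1_t1 p q u s v t - 1 = (p - q) / (u - v) by rewrite /mH1_t1; field_nz.
have ed : mH1_v1 p q u s v t - u = s * ((p - q) / (s - t)) by rewrite /mH1_v1; ring.
have ed' : mH1_v1 p q u s v t - u - (p - q) = t * ((p - q) / (s - t)).
  by rewrite /mH1_v1; field_nz.
split; first by rewrite /Rc_def ek ed' ed; split; rewrite ?mulf_neq0 ?invr_eq0.
rewrite /Rc ek ed' ed /mH1_u2 /mH1_s2 /mH1_v1 /mH1_t1.
by congr ((_, _, _), (_, _, _)); field_nz.
Qed.

Lemma Rc_solves_mH1 (p q u s v1 t1 : C) :
  p != q -> s != 0 -> Rc_def (u, s, p) (v1, t1, q) ->
  let: ((u2, s2, _), (v, t, _)) := Rc (u, s, p) (v1, t1, q) in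
  mH1_nondeg u s v t /\ mH1 p q u s v t u2 s2 v1 t1.
Proof.
move=> hpq hs [hk hd hd'] /=.
have hpq' : p - q != 0 by rewrite subr_eq0.
set t := s * _ / _; set v := u - _.
have est : s - t = s * (p - q) / (v1 - u) by rewrite /t; field_nz.
have euv : u - v = (p - q) / (s * t1 - 1) by rewrite /v; ring.
split; first by split; rewrite ?est ?euv ?mulf_neq0 ?invr_eq0.
by rewrite /mH1 /mH1_u2 /mH1_s2 /mH1_v1 /mH1_t1 /t /v; split; field_nz.
Qed.

End Companion.

Definition rc_shift {F : fieldType} (d k : F) : F := d / (k - 1).
Definition rc_ratio {F : fieldType} (d x : F) : F := x / (x - d).

Section BraidIdentities.
Variables (F : fieldType) (a1 a2 a3 : F).

Lemma rc_shift_braid_first (e L : F) :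
  L - 1 != 0 -> e - rc_shift (a2 - a3) L - (a1 - a3) != 0 ->
  e - (a1 - a2) != 0 -> L * rc_ratio (a1 - a2) e - 1 != 0 ->
  rc_shift (a2 - a3) L
  + rc_shift (a1 - a2) (L * rc_ratio (a1 - a3) (e - rc_shift (a2 - a3) L))
  = rc_shift (a1 - a3) (L * rc_ratio (a1 - a2) e).
Proof.
move=> hL hr he hLr.
have hn : e * (L - 1) - (a2 - a3) - (a1 - a3) * (L - 1) != 0.
  by apply: (neq0_mul_eq hr hL); rewrite /rc_shift; field_nz.
have hm : L * e - (e - (a1 - a2)) != 0.
  by apply: (neq0_mul_eq hLr he); rewrite /rc_ratio; field_nz.
by rewrite /rc_shift /rc_ratio; field_nz.
Qed.

Lemma rc_ratio_braid_first (e L : F) :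
  L - 1 != 0 -> e - rc_shift (a2 - a3) L - (a1 - a3) != 0 ->
  e - (a1 - a2) != 0 -> L * rc_ratio (a1 - a2) e - 1 != 0 ->
  e - (a1 - a2) - rc_shift (a1 - a3) (L * rc_ratio (a1 - a2) e) - (a2 - a3) != 0 ->
  rc_ratio (a1 - a3) (e - rc_shift (a2 - a3) L)
  = rc_ratio (a1 - a2) e
    * rc_ratio (a2 - a3) (e - (a1 - a2) - rc_shift (a1 - a3) (L * rc_ratio (a1 - a2) e)).
Proof.
move=> hL hr he hLr hr'.
have hn : e * (L - 1) - (a2 - a3) - (a1 - a3) * (L - 1) != 0.
  by apply: (neq0_mul_eq hr hL); rewrite /rc_shift; field_nz.
have hm : L * e - (e - (a1 - a2)) != 0.
  by apply: (neq0_mul_eq hLr he); rewrite /rc_ratio; field_nz.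
have hn' : (e - (a1 - a2) - (a2 - a3)) * (L * e - (e - (a1 - a2)))
           - (a1 - a3) * (e - (a1 - a2)) != 0.
  by apply: (neq0_mul_eq hr' hm); rewrite /rc_shift /rc_ratio; field_nz.
by rewrite /rc_shift /rc_ratio; field_nz.
Qed.

Lemma rc_ratio_braid_last (d K : F) :
  d != 0 -> d - (a2 - a3) != 0 -> K / rc_ratio (a2 - a3) d - 1 != 0 ->
  K - 1 != 0 -> d + (a1 - a2) + rc_shift (a1 - a2) K - (a1 - a3) != 0 ->
  d + (a1 - a2) + rc_shift (a1 - a3) (K / rc_ratio (a2 - a3) d) - (a1 - a2) != 0 ->
  rc_ratio (a2 - a3) d
  * rc_ratio (a1 - a2) (d + (a1 - a2) + rc_shift (a1 - a3) (K / rc_ratio (a2 - a3) d))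
  = rc_ratio (a1 - a3) (d + (a1 - a2) + rc_shift (a1 - a2) K).
Proof.
move=> hd hdb hKr hK hr hr'.
have hm : K * (d - (a2 - a3)) - d != 0.
  by apply: (neq0_mul_eq hKr hd); rewrite /rc_ratio; field_nz.
have hn : (d + (a1 - a2)) * (K - 1) + (a1 - a2) - (a1 - a3) * (K - 1) != 0.
  by apply: (neq0_mul_eq hr hK); rewrite /rc_shift; field_nz.
have hn' : d * (K * (d - (a2 - a3)) - d) + (a1 - a3) * d != 0.
  by apply: (neq0_mul_eq hr' hm); rewrite /rc_shift /rc_ratio; field_nz.
by rewrite /rc_shift /rc_ratio; field_nz.
Qed.

Lemma rc_shift_braid_last (d K : F) :
  d != 0 -> d - (a2 - a3) != 0 -> K / rc_ratio (a2 - a3) d - 1 != 0 ->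
  K - 1 != 0 -> d + (a1 - a2) + rc_shift (a1 - a2) K != 0 ->
  d + (a1 - a2) + rc_shift (a1 - a2) K - (a1 - a3) != 0 ->
  K / rc_ratio (a1 - a3) (d + (a1 - a2) + rc_shift (a1 - a2) K) - 1 != 0 ->
  rc_shift (a1 - a3) (K / rc_ratio (a2 - a3) d)
  = rc_shift (a1 - a2) K
    + rc_shift (a2 - a3) (K / rc_ratio (a1 - a3) (d + (a1 - a2) + rc_shift (a1 - a2) K)).
Proof.
move=> hd hdb hKr hK hs hr hKr'.
have hm : K * (d - (a2 - a3)) - d != 0.
  by apply: (neq0_mul_eq hKr hd); rewrite /rc_ratio; field_nz.
have hs' : (d + (a1 - a2)) * (K - 1) + (a1 - a2) != 0.
  by apply: (neq0_mul_eq hs hK); rewrite /rc_shift; field_nz.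
have hn : (d + (a1 - a2)) * (K - 1) + (a1 - a2) - (a1 - a3) * (K - 1) != 0.
  by apply: (neq0_mul_eq hr hK); rewrite /rc_shift; field_nz.
have hn' : K * ((d + (a1 - a2)) * (K - 1) + (a1 - a2) - (a1 - a3) * (K - 1))
           - ((d + (a1 - a2)) * (K - 1) + (a1 - a2)) != 0.
  by apply: (neq0_mul_eq hKr' hs'); rewrite /rc_shift /rc_ratio; field_nz.
by rewrite /rc_shift /rc_ratio; field_nz.
Qed.

End BraidIdentities.

Section YangBaxter.
Variable C : numClosedFieldType.

Lemma RcE {u s p v1 t1 q : C} : s * t1 - 1 != 0 ->
  Rc (u, s, p) (v1, t1, q) =
  ((v1 - (p - q) - rc_shift (p - q) (s * t1), t1 * rc_ratio (p - q) (v1 - u), p),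
   (u - rc_shift (p - q) (s * t1), s / rc_ratio (p - q) (v1 - u), q)).
Proof.
move=> hk; rewrite /Rc /rc_shift /rc_ratio invf_div !mulrA.
by congr ((_, _, _), _); field.
Qed.

Lemma Rc_yang_baxter (w : pt C * pt C * pt C) :
  R23_def w -> R13_def (R23 w) -> R12_def (R13 (R23 w)) ->
  R12_def w -> R13_def (R12 w) -> R23_def (R13 (R12 w)) ->
  R12 (R13 (R23 w)) = R23 (R13 (R12 w)).
Proof.
case: w => [[[[x1 y1] a1] [[x2 y2] a2]] [[x3 y3] a3]].
rewrite /R12 /R13 /R23 /R12_def /R13_def /R23_def.
move=> -[h1 h2 h3]; rewrite (RcE h1); cbv beta iota.
move=> -[h4 _ h6]; rewrite (RcE h4); cbv beta iota.
move=> -[h7 _ h9]; rewrite (RcE h7); cbv beta iota.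
move=> -[k1 k2 k3]; rewrite (RcE k1); cbv beta iota.
move=> -[k4 k5 k6]; rewrite (RcE k4); cbv beta iota.
move=> -[k7 _ k9]; rewrite (RcE k7); cbv beta iota.
set c1 := rc_shift (a2 - a3) (y2 * y3); set r1 := rc_ratio (a2 - a3) (x3 - x2).
set c1' := rc_shift (a1 - a2) (y1 * y2); set r1' := rc_ratio (a1 - a2) (x2 - x1).
have [hr1 hr1'] : r1 != 0 /\ r1' != 0 by split; rewrite mulf_neq0 ?invr_eq0.
rewrite [x2 - c1 - x1]addrAC [y1 * (y2 / r1)]mulrA in h4 h6 h9 *.
rewrite [y2 * r1' * y3]mulrAC in k4 k9 *.
rewrite (_ : x3 - (x2 - (a1 - a2) - c1') = x3 - x2 + (a1 - a2) + c1') in k5 k6 k7 *;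
  last by ring.
set c2 := rc_shift (a1 - a3) (y1 * y2 / r1); set r2 := rc_ratio (a1 - a3) (x2 - x1 - c1).
set c2' := rc_shift (a1 - a3) (y2 * y3 * r1').
set r2' := rc_ratio (a1 - a3) (x3 - x2 + (a1 - a2) + c1').
have hr2' : r2' != 0 by rewrite mulf_neq0 ?invr_eq0.
rewrite (_ : y2 / r1 * r2 * (y3 * r1) = y2 * y3 * r2); last by field_nz.
rewrite (_ : y1 / r1' * (y2 * r1' / r2') = y1 * y2 / r2') in k7 *; last by field_nz.
rewrite (_ : x3 - (a2 - a3) - c1 - (x2 - c1 - (a1 - a3) - c2)
             = x3 - x2 + (a1 - a2) + c2) in h9 *; last by ring.
rewrite (_ : x2 - (a1 - a2) - c1' - c2' - (x1 - c1')
             = x2 - x1 - (a1 - a2) - c2') in k9 *; last by ring.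
set c3 := rc_shift (a1 - a2) (y2 * y3 * r2).
set r3 := rc_ratio (a1 - a2) (x3 - x2 + (a1 - a2) + c2).
set c3' := rc_shift (a2 - a3) (y1 * y2 / r2').
set r3' := rc_ratio (a2 - a3) (x2 - x1 - (a1 - a2) - c2').
have EA : c1 + c3 = c2' by apply: rc_shift_braid_first.
have EF : r2 = r1' * r3' by apply: rc_ratio_braid_first.
have EB : r1 * r3 = r2' by apply: rc_ratio_braid_last.
have ED : c2 = c1' + c3' by apply: rc_shift_braid_last.
clearbody c1 c2 c3 c1' c2' c3' r1 r2 r3 r1' r2' r3'.
congr ((_, _, _), (_, _, _), (_, _, _)).
- by rewrite -EA; ring.
- by rewrite -EB mulrA.
- by rewrite ED -EA; ring.
- by rewrite EF -EB invfM; ring.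
- by rewrite ED; ring.
- by rewrite EF invfM mulrA.
Qed.

End YangBaxter.

Theorem proposition3p1 (C : numClosedFieldType) :
  (* (1) *)
  (forall p q u s v t u2 s2 v1 t1 : C,
     mH1_nondeg u s v t -> mH1 p q u s v t u2 s2 v1 t1 -> t1 != 0 ->
     s2 / t1 = s / t /\
     u2 - v1 + (p - q) / 2%:R = - (u - v + (p - q) / 2%:R)) /\
  (* (2) *)
  (forall p q u s v t u2 s2 v1 t1 : C,
     mH1_nondeg u s v t -> mH1 p q u s v t u2 s2 v1 t1 -> t1 != 0 ->
     (t * u = s * v <-> u2 * s2 = t1 * v1)) /\
  (* (3) the multi-component system (with n = 2 it is (mH1)) *)
  (forall p q u s v t : C,
     let P := [ffun i : 'I_2 => if i == ord0 then p else q] in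
     let X := [ffun i : 'I_2 => if i == ord0 then u else v] in
     let Y := [ffun i : 'I_2 => if i == ord0 then s else t] in
     mH1 p q u s v t (Xstep P X Y ord0 ord_max) (Ystep P X Y ord0 ord_max)
                     (Xstep P X Y ord_max ord0) (Ystep P X Y ord_max ord0)) /\
  (forall (n : nat) (P X Y : 'I_n -> C) (i j k : 'I_n),
     i != j -> j != k -> i != k ->
     step_ok X Y i k -> step_ok X Y j k ->
     step_ok (shiftX P X Y k) (shiftY P X Y k) i j ->
     step_ok X Y i j -> step_ok X Y k j ->
     step_ok (shiftX P X Y j) (shiftY P X Y j) i k ->
     Xstep P (shiftX P X Y k) (shiftY P X Y k) i j
       = Xstep P (shiftX P X Y j) (shiftY P X Y j) i k /\
     Ystep P (shiftX P X Y k) (shiftY P X Y k) i j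
       = Ystep P (shiftX P X Y j) (shiftY P X Y j) i k) /\
  (* (4) *)
  (forall p q u s v t u2 s2 v1 t1 : C,
     mH1_nondeg u s v t ->
     ((forall lam : C,
         Lmat u2 s2 p lam *m Lmat v t q lam = Lmat v1 t1 q lam *m Lmat u s p lam)
      <-> mH1 p q u s v t u2 s2 v1 t1)) /\
  (* (5) the companion map Rc solves (mH1) for (u2,s2,v,t) ... *)
  (forall p q u s v1 t1 : C,
     p != q -> s != 0 -> Rc_def (u, s, p) (v1, t1, q) ->
     let: ((u2, s2, _), (v, t, _)) := Rc (u, s, p) (v1, t1, q) in
     mH1_nondeg u s v t /\ mH1 p q u s v t u2 s2 v1 t1) /\
  (forall p q u s v t u2 s2 v1 t1 : C,
     p != q -> mH1_nondeg u s v t -> mH1 p q u s v t u2 s2 v1 t1 ->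
     Rc_def (u, s, p) (v1, t1, q) /\
     Rc (u, s, p) (v1, t1, q) = ((u2, s2, p), (v, t, q))) /\
  (* ... and is a Yang-Baxter map *)
  (forall w : pt C * pt C * pt C,
     R23_def w -> R13_def (R23 w) -> R12_def (R13 (R23 w)) ->
     R12_def w -> R13_def (R12 w) -> R23_def (R13 (R12 w)) ->
     R12 (R13 (R23 w)) = R23 (R13 (R12 w))).
Proof.
split.
  move=> p q u s v t u2 s2 v1 t1 nd [-> -> -> ->] ht1; split; first exact: mH1_s2_div_t1.
  by case: nd => _ _ hst _; apply: mH1_shifted_diff_opp.
split; first by move=> p q u s v t u2 s2 v1 t1 nd [-> -> -> ->]; apply: mH1_cross_iff.
split; first exact: mH1_two_components.
split; first by move=> n P X Y i j k _ _ _; apply: shift_consistent.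
split; first exact: Lax_iff_mH1.
split; first exact: Rc_solves_mH1.
split; first exact: Rc_of_mH1.
exact: Rc_yang_baxter.
Qed.
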